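(* Let $a,b,c,d\ge1$ be integers and let $$M=\begin{bmatrix}a&-1&-1&-1\\-1&b&-1&-1\\-1&-1&c&-1\\-1&-1&-1&d\end{bmatrix}.$$ If $\det M=0$, then $\min\{a,b,c,d\}\le3$. *)

From mathcomp Require Import all_boot all_order all_algebra.
Set Implicit Arguments. Unset Strict Implicit. Unset Printing Implicit Defensive.
Import GRing.Theory Num.Theory.
Local Open Scope ring_scope.

Definition Mabcd (a b c d : int) : 'M[int]_4 :=
  \matrix_(i < 4, j < 4)
    if i == j then [:: a; b; c; d]`_i else -1.

From mathcomp Require Import all_boot all_order all_algebra ring lra.
Import Order.TTheory GRing.Theory Num.Theory.
Set Implicit Arguments. Unset Strict Implicit. Unset Printing Implicit Defensive.
Local Open Scope ring_scope.

(* With A = a + 1, ..., D = d + 1 the matrix is diag(A, B, C, D) - J, whose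
   determinant is ABCD (1 - 1/A - 1/B - 1/C - 1/D).  If a, b, c, d > 3 then
   every 1/A is below 1/4, so the determinant is positive. *)

Lemma det_diag_offdiag_m1 (R : comPzRingType) (a b c d : R) :
  \det (\matrix_(i < 4, j < 4) if i == j then [:: a; b; c; d]`_i else -1) =
  let A := a + 1 in let B := b + 1 in let C := c + 1 in let D := d + 1 in
  A * B * C * D - (A * B * C + A * B * D + A * C * D + B * C * D).
Proof.
do 3 rewrite !(expand_det_row _ ord0) !big_ord_recl !big_ord0 /cofactor.
rewrite !det_mx11 !mxE /= /bump /=.
ring.
Qed.

Lemma sum_triples_lt_prod (R : realDomainType) (A B C D : R) :
  4 < A -> 4 < B -> 4 < C -> 4 < D ->
  A * B * C + A * B * D + A * C * D + B * C * D < A * B * C * D.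
Proof.
move=> gtA gtB gtC gtD.
have pos x : 4 < x -> 0 < x by apply: lt_trans.
have ltA : 4 * (B * C * D) < A * (B * C * D) by rewrite ltr_pM2r ?mulr_gt0 ?pos.
have ltB : 4 * (A * C * D) < B * (A * C * D) by rewrite ltr_pM2r ?mulr_gt0 ?pos.
have ltC : 4 * (A * B * D) < C * (A * B * D) by rewrite ltr_pM2r ?mulr_gt0 ?pos.
have ltD : 4 * (A * B * C) < D * (A * B * C) by rewrite ltr_pM2r ?mulr_gt0 ?pos.
lra.
Qed.

Theorem lemma3p5 (a b c d : int) :
  1 <= a -> 1 <= b -> 1 <= c -> 1 <= d ->
  \det (Mabcd a b c d) = 0 ->
  Num.min (Num.min a b) (Num.min c d) <= 3.
Proof.
move=> _ _ _ _; rewrite det_diag_offdiag_m1 /= => /eqP.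
rewrite subr_eq0 => /eqP det0.
rewrite leNgt !lt_min; apply/negP => /andP[/andP[gta gtb] /andP[gtc gtd]].
have shift (x : int) : 3 < x -> 4 < x + 1 by move=> ?; lra.
have := sum_triples_lt_prod (shift _ gta) (shift _ gtb) (shift _ gtc) (shift _ gtd).
by rewrite det0 ltxx.
Qed.
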